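(* For every $C>1$ there are $\varepsilon>0$ and $n_C\in\mathbb N$ such that the following holds. If $G=(V_1,V_2,E)$ is a $C$-bipartite-Ramsey graph with $|V_1|\ge|V_2|/2\ge n_C$, then either $V_1$ contains an $\varepsilon$-pair-star of size $|V_1|^{0.5}$, or $V_1$ contains an $\varepsilon$-pair-matching of size $|V_1|^{0.5}$.
   Context: A bipartite graph $G=(V_1,V_2,E)$ has vertex set $V_1\sqcup V_2$ and edge set $E\subset V_1\times V_2$; $N(v)$ is the neighbourhood and $d(v)$ the degree of $v$. Given $C>0$, $G$ is $C$-bipartite-Ramsey if for all integers $t_1\ge C\log_2|V_1|$, $t_2\ge C\log_2|V_2|$ there are no $T_1\subset V_1$, $T_2\subset V_2$ with $|T_1|=t_1$, $|T_2|=t_2$ such that all pairs in $T_1\times T_2$ are edges, or all are non-edges. For $u,v\in V_1$, $\mathrm{div}(u,v)=N(u)\triangle N(v)$ and $\mathrm{divb}(u,v)$ is the larger of $N(u)\setminus N(v)$, $N(v)\setminus N(u)$ (either if equal). Ordered pairs $\mathbf p=(u,v)$ of distinct vertices are written so that $\mathrm{divb}(\mathbf p)=N(u)\setminus N(v)$, and $d_{\mathbf p}:=d(u)-d(v)$. An $\varepsilon$-pair-star of size $k$ (associated to $V_1$) rooted at $x_0$ is a set $\{x_0,x_1,\ldots,x_k\}\subset V_1$ with $|d(x_j)-d(x_0)|\le|V_2|^{0.5}$ for all $j\in[k]$ and $|\mathrm{div}(x_i,x_j)|\ge\varepsilon|V_2|$ for all $i\ne j$ in $\{0,\ldots,k\}$.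 An $\varepsilon$-pair-matching of size $k$ (associated to $V_1$) is a collection of pairwise vertex-disjoint ordered pairs $\mathbf p_i=(x_i,y_i)$, $i\in[k]$, of vertices of $V_1$ with $d_{\mathbf p_i}\le|V_2|^{0.5}$ for all $i$, and $|\mathrm{divb}(\mathbf p_i)\setminus N(x_j)|\ge\varepsilon|V_2|$ and $|\mathrm{divb}(\mathbf p_i)\setminus N(y_j)|\ge\varepsilon|V_2|$ for all $i\ne j$ in $[k]$. Floors/ceilings of non-integer sizes are ignored. *)

From HB Require Import structures.
From mathcomp Require Import all_boot all_order all_algebra.
From mathcomp Require Import reals exp Rstruct.
Set Implicit Arguments. Unset Strict Implicit. Unset Printing Implicit Defensive.
Import Order.TTheory GRing.Theory Num.Theory.
Local Open Scope ring_scope.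

Notation RR := Rdefinitions.R.

Definition log2 (x : RR) : RR := ln x / ln 2.

Section Bip.
Variables (V1 V2 : finType) (E : V1 -> V2 -> bool).

Definition nbh (v : V1) : {set V2} := [set w | E v w].
Definition deg (v : V1) : nat := #|nbh v|.

Definition bip_ramsey (C : RR) : Prop :=
  forall t1 t2 : nat,
    C * log2 #|V1|%:R <= t1%:R -> C * log2 #|V2|%:R <= t2%:R ->
    ~ (exists (T1 : {set V1}) (T2 : {set V2}),
          #|T1| = t1 /\ #|T2| = t2 /\
          ((forall x y, x \in T1 -> y \in T2 -> E x y) \/
           (forall x y, x \in T1 -> y \in T2 -> ~~ E x y))).

Definition divs (u v : V1) : {set V2} :=
  (nbh u :\: nbh v) :|: (nbh v :\: nbh u).

(* An ordered pair (u,v) is written so that divb(u,v) = N(u) \ N(v),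
   i.e. |N(u)\N(v)| >= |N(v)\N(u)|. *)
Definition well_ordered_pair (u v : V1) : bool :=
  (#|nbh v :\: nbh u| <= #|nbh u :\: nbh v|)%N.
Definition divb_ord (u v : V1) : {set V2} := nbh u :\: nbh v.
Definition dpair (u v : V1) : int := (deg u)%:Z - (deg v)%:Z.

(* eps-pair-star of size k rooted at x 0: vertices x 0, ..., x k *)
Definition pair_star (eps : RR) (k : nat) (x : 'I_k.+1 -> V1) : Prop :=
  injective x /\
  (forall j : 'I_k.+1,
      `|(deg (x j))%:R - (deg (x ord0))%:R| <= Num.sqrt (#|V2|%:R : RR)) /\
  (forall i j : 'I_k.+1, i != j -> eps * #|V2|%:R <= (#|divs (x i) (x j)|)%:R).

Definition pair_matching (eps : RR) (k : nat) (x y : 'I_k -> V1) : Prop :=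
  (forall i, x i != y i) /\
  (forall i j, i != j -> [/\ x i != x j, y i != y j & x i != y j]) /\
  (forall i, well_ordered_pair (x i) (y i)) /\
  (forall i, ((dpair (x i) (y i))%:~R : RR) <= Num.sqrt (#|V2|%:R : RR)) /\
  (forall i j, i != j ->
     eps * #|V2|%:R <= (#|divb_ord (x i) (y i) :\: nbh (x j)|)%:R /\
     eps * #|V2|%:R <= (#|divb_ord (x i) (y i) :\: nbh (y j)|)%:R).

End Bip.

From HB Require Import structures.
From mathcomp Require Import all_boot all_order all_algebra.
From mathcomp Require Import reals exp Rstruct.
From mathcomp Require Import zify.
Import Order.TTheory GRing.Theory Num.Theory.

(* Let K > C be an integer and call u, v close when |div(u,v)| < |V2|/(32K).
   Greedily choosing 4Kc vertices of a set S keeps a 2^-c fraction of the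
   vertices that miss at most a 1/(16K) fraction of S as common neighbours;
   so by the Ramsey property at most L = t1 2^c vertices (t1 ~ K log|V1|,
   16^c ~ |V2|) almost cover any large S.  Applied to N(u) or its complement,
   every vertex is close to at most L others.  Sorting V1 into degree buckets
   of width ~ |V2|^(1/2), a bucket with more than L vertices contains a far
   pair, so all but (#buckets) L vertices are paired into disjoint far pairs
   of similar degrees.  For a far pair p, |divb p| >= |V2|/(64K), so at most L
   vertices, hence at most L other pairs, almost cover divb p.  An independent
   set of this conflict digraph of out-degree L has at least |pairs|/(2L+1)
   >= |V1|^(1/2) pairs and is a pair-matching with eps = 1/(1024 K^2). *)

Set Implicit Arguments. Unset Strict Implicit. Unset Printing Implicit Defensive.

Lemma mul_leq_exp2 A f : 32 * (A + 6) <= f -> A * f.+1 <= 2 ^ (f %/ 16).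
Proof.
move=> hf.
have hA : A <= 2 ^ A by exact/ltnW/ltn_expl.
have hf32 : (f %/ 32).+1 <= 2 ^ (f %/ 32) by exact: ltn_expl.
have : A * f.+1 <= 2 ^ A * (2 ^ 5 * 2 ^ (f %/ 32)).
  by apply: leq_mul => //; apply: leq_trans (_ : 32 * (f %/ 32).+1 <= _); lia.
by rewrite -!expnD => /leq_trans; apply; rewrite leq_exp2l //; lia.
Qed.

Lemma bernoulli_subn a n : (a - n) * a ^ n <= a * (a - 1) ^ n.
Proof.
elim: n => [|n IH]; first by rewrite subn0.
have [an|na] := leqP a n; first by rewrite (eqP (_ : a - n.+1 == 0)) //; lia.
have step : (a - n.+1) * a <= (a - n) * (a - 1) by nia.
rewrite !expnS.
have := leq_mul step (leqnn (a ^ n)); have := leq_mul (leqnn (a - 1)) IH; nia.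
Qed.

Lemma expn_double_leq n : 0 < n -> (2 * n) ^ n <= 2 * (2 * n - 1) ^ n.
Proof.
move=> n0; have := bernoulli_subn (2 * n) n.
by rewrite (_ : 2 * n - n = n) -?mulnA ?(mulnCA 2 n) ?leq_pmul2l //; lia.
Qed.

Lemma leq_sq_of_linear n L i :
  0 < n -> n <= 12 * (L * i) -> 256 * L * L <= n -> n <= i * i.
Proof.
move=> n0 hlin hL.
have h1 : n * n <= 144 * (L * L * (i * i)) by apply: leq_trans (leq_mul hlin hlin) _; lia.
have h2 : 256 * (L * L * (i * i)) <= n * (i * i) by apply: leq_trans (leq_mul hL (leqnn _)); lia.
have : n * (256 * n) <= n * (144 * (i * i)) by nia.
by rewrite leq_pmul2l //; lia.
Qed.

Lemma sum_card_rel (X Y : finType) (A : {set X}) (B : {set Y}) (r : X -> Y -> bool) :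
  \sum_(a in A) #|[set b in B | r a b]| = \sum_(b in B) #|[set a in A | r a b]|.
Proof.
have card_sep (Z : finType) (C : {set Z}) (P : pred Z) :
    #|[set z in C | P z]| = \sum_(z in C) P z.
  rewrite -sum1_card big_mkcond [RHS]big_mkcond; apply: eq_bigr => z _.
  by rewrite !inE; case: (z \in C); case: (P z).
under eq_bigr do rewrite card_sep; rewrite exchange_big.
by apply: eq_bigr => b _; rewrite card_sep.
Qed.

Section OutDegree.
Variables (X : finType) (r : rel X) (D : nat).

Lemma exists_low_total_degree (A : {set X}) a0 : a0 \in A ->
  (forall a, a \in A -> #|[set b in A | r a b]| <= D) ->
  exists2 a, a \in A & #|[set b in A | r a b]| + #|[set b in A | r b a]| <= D.*2.
Proof.
move=> a0A hout; apply/exists_inP; apply: contraT => /exists_inPn hn.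
have hin : \sum_(a in A) #|[set b in A | r b a]| = \sum_(a in A) #|[set b in A | r a b]|.
  exact/esym/sum_card_rel.
have hlow : \sum_(a in A) D.*2.+1 <= (\sum_(a in A) #|[set b in A | r a b]|) * 2.
  apply: leq_trans (_ : _ <= \sum_(a in A) (#|[set b in A | r a b]| + #|[set b in A | r b a]|)) _.
    by apply: leq_sum => a aA; rewrite ltnNge hn.
  by rewrite big_split /= hin muln2 -addnn.
have hup : \sum_(a in A) #|[set b in A | r a b]| <= \sum_(a in A) D by exact: leq_sum.
have : 0 < #|A| by apply/card_gt0P; exists a0.
rewrite !sum_nat_const in hlow hup; lia.
Qed.

Lemma independent_set_of_outdeg (A : {set X}) :
  (forall a, a \in A -> #|[set b in A | r a b]| <= D) ->
  exists I : {set X}, [/\ I \subset A, {in I &, forall a b, a != b -> ~~ r a b}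
                        & #|A| <= D.*2.+1 * #|I|].
Proof.
have [n] := ubnP #|A|; elim: n A => // n IH A hA hout.
have [->|[a0 a0A]] := set_0Vmem A.
  by exists set0; rewrite sub0set cards0; split=> // a b; rewrite inE.
have [a aA ha] := exists_low_total_degree a0A hout.
pose N := [set b in A | r a b] :|: [set b in A | r b a].
pose A' := A :\: (a |: N).
have A'A : A' \subset A by apply: subsetDl.
have aA' : a \notin A' by rewrite !inE eqxx.
have ltA' : #|A'| < n.
  suff : #|A'| < #|A| by lia.
  by apply/proper_card/properP; split=> //; exists a.
have outA' b : b \in A' -> #|[set c in A' | r b c]| <= D.
  move=> bA'; apply: leq_trans (hout b (subsetP A'A b bA')); apply/subset_leq_card/subsetP => c.
  by rewrite !inE => /andP[/andP[_ ->] ->].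
have [I' [I'A' I'ind hI']] := IH A' ltA' outA'.
have a_free b : b \in I' -> ~~ r a b && ~~ r b a.
  move/(subsetP I'A'); rewrite !inE => /andP[]; rewrite !negb_or => /and3P[_ h1 h2] bA.
  by rewrite bA /= in h1 h2; rewrite h1 h2.
exists (a |: I'); split.
- by rewrite subUset sub1set aA (subset_trans I'A' A'A).
- move=> b c; rewrite !inE => /orP[/eqP->|hb] /orP[/eqP->|hc]; rewrite ?eqxx //.
  + by have /andP[] := a_free c hc.
  + by have /andP[] := a_free b hb.
  + exact: I'ind.
- have hN : #|A| <= #|A'| + (#|N|).+1.
    have := cardsID (a |: N) A; have := subset_leq_card (subsetIr A (a |: N)).
    rewrite cardsU1 -/A'; case: (a \in N); lia.
  case: (leq_card_setU [set b in A | r a b] [set b in A | r b a]) => hU _.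
  rewrite -/N in hU; rewrite cardsU1 (negbTE (contra (subsetP I'A' a) aA')) add1n mulnS; lia.
Qed.

End OutDegree.

Section BucketPairing.
Variables (V : finType) (close : rel V) (bucket : V -> nat) (nb L : nat) (oriented : rel V).
Hypotheses (close_refl : reflexive close) (close_sym : symmetric close)
  (card_close : forall u, #|[set w | close u w]| <= L)
  (bucket_lt : forall u, bucket u < nb) (oriented_total : total oriented).

Lemma card_small_buckets (B : {set V}) :
  (forall u, u \in B -> #|[set w in B | bucket w == bucket u]| <= L) -> #|B| <= nb * L.
Proof.
move=> hB; pose p w : 'I_nb := Ordinal (bucket_lt w).
rewrite -sum1_card (partition_big p predT) //= -[nb in nb * L]card_ord -sum_nat_const.
apply: leq_sum => j _; case: (pickP [pred w in B | p w == j]) => [w0 /andP[w0B /eqP <-]|none].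
- apply: leq_trans (hB w0 w0B); rewrite -sum1_card; apply/eq_leq/eq_bigl => w.
  by rewrite !inE; congr (_ && _); apply/eqP/eqP => [/(congr1 val)|/val_inj].
- by rewrite big1 // => w /andP[wB hw]; have := none w; rewrite /= wB hw.
Qed.

Definition far_pair (B : {set V}) (p : V * V) :=
  [&& p.1 \in B, p.2 \in B, ~~ close p.1 p.2, bucket p.1 == bucket p.2 & oriented p.1 p.2].

Definition disjoint_pairs (Q : {set V * V}) :=
  {in Q &, forall p q, p != q -> [/\ p.1 != q.1, p.2 != q.2 & p.1 != q.2]}.

Lemma exists_far_pairing (B : {set V}) : exists2 Q : {set V * V},
  {subset Q <= far_pair B} & disjoint_pairs Q /\ #|B| <= 2 * #|Q| + nb * L.
Proof.
have [n] := ubnP #|B|; elim: n B => // n IH B hB.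
have [/exists_inP[u uB hu]|/exists_inPn small] :=
  boolP [exists u in B, L < #|[set w in B | bucket w == bucket u]|]; last first.
  exists set0 => [p|]; rewrite ?inE // cards0; split=> [p q|]; rewrite ?inE //.
  by apply: card_small_buckets => u uB; rewrite leqNgt small.
have [v vB uv] : exists2 v, v \in [set w in B | bucket w == bucket u] & ~~ close u v.
  apply/exists_inP; apply: contraT => /exists_inPn all_close.
  suff : #|[set w in B | bucket w == bucket u]| <= L by rewrite leqNgt hu.
  apply: leq_trans (card_close u); apply/subset_leq_card/subsetP => w hw.
  by rewrite inE -[close u w]negbK all_close.
move: vB; rewrite inE => /andP[vB /eqP buv].
have vu : v != u by apply: contraNneq uv => ->; rewrite close_refl.
pose p := if oriented u v then (u, v) else (v, u).
have p_far : far_pair B p.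
  rewrite /p /far_pair; case ouv: (oriented u v) => /=.
    by rewrite uB vB uv buv eqxx.
  have := oriented_total u v; rewrite ouv /= => ->.
  by rewrite uB vB close_sym uv buv eqxx.
pose B' := B :\ u :\ v.
have B'B : B' \subset B by apply/subsetP => x; rewrite !inE => /and3P[].
have B'p x : x \in B' -> x != p.1 /\ x != p.2.
  by rewrite !inE => /and3P[xv xu _]; rewrite /p; case: ifP.
have cardB : #|B| = (#|B'|).+2.
  by rewrite (cardsD1 u B) uB (cardsD1 v (B :\ u)) !inE vu vB.
have [Q' Q'far [Q'disj cardQ']] := IH B' (ltac:(lia)).
have Q'p q : q \in Q' -> [/\ p.1 != q.1, p.2 != q.2, p.1 != q.2 & q.1 != p.2].
  case/Q'far/and5P => q1 q2 _ _ _.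
  by case: (B'p _ q1) (B'p _ q2) => ? ? [? ?]; split; rewrite // eq_sym.
have pQ' : p \notin Q' by apply/negP => /Q'p[]; rewrite eqxx.
exists (p |: Q') => [q|]; first case/setU1P => [->//|/Q'far].
  by case/and5P => q1 q2 *; apply/and5P; split; rewrite ?(subsetP B'B).
split; last by rewrite cardsU1 pQ'; lia.
move=> q r; rewrite !inE => /orP[/eqP->|qQ] /orP[/eqP->|rQ]; rewrite ?eqxx //.
- by move=> _; case: (Q'p r rQ).
- by move=> _; case: (Q'p q qQ) => *; split; rewrite // eq_sym.
- exact: Q'disj.
Qed.

End BucketPairing.

Definition no_biclique (V1 V2 : finType) (E : V1 -> V2 -> bool) (t1 t2 : nat) :=
  forall (T1 : {set V1}) (T2 : {set V2}), t1 <= #|T1| -> #|T2| = t2 ->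
    ~ (forall x y, x \in T1 -> y \in T2 -> E x y).

Section Greedy.
Variables (V1 V2 : finType) (E : V1 -> V2 -> bool).

Definition common_nbh (T : {set V1}) (Y : {set V2}) := [set v in T | Y \subset nbh E v].

Lemma exists_rarely_missed q (A : {set V1}) (R : {set V2}) : 0 < #|R| ->
  (forall v, v \in A -> q * #|R :\: nbh E v| <= #|R|) ->
  exists2 y, y \in R & q * #|[set v in A | ~~ E v y]| <= #|A|.
Proof.
move=> R0 hA; apply/exists_inP; apply: contraT => /exists_inPn often.
have miss v : #|R :\: nbh E v| = #|[set y in R | ~~ E v y]|.
  by apply: eq_card => y; rewrite !inE andbC.
have hup : q * \sum_(v in A) #|[set y in R | ~~ E v y]| <= #|A| * #|R|.
  rewrite big_distrr -sum_nat_const; apply: leq_sum => v vA; rewrite -miss; exact: hA.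
have hlow : #|R| * #|A|.+1 <= q * \sum_(v in A) #|[set y in R | ~~ E v y]|.
  rewrite (sum_card_rel A R (fun v y => ~~ E v y)) big_distrr -sum_nat_const.
  by apply: leq_sum => y yR; rewrite ltnNge often.
nia.
Qed.

Lemma greedy_common_nbh q (S : {set V2}) (T : {set V1}) : 0 < q ->
  (forall v, v \in T -> 2 * q * #|S :\: nbh E v| <= #|S|) ->
  forall k, 2 * k <= #|S| -> exists Y : {set V2},
    [/\ Y \subset S, #|Y| = k & #|T| * (q - 1) ^ k <= #|common_nbh T Y| * q ^ k].
Proof.
move=> q0 hT; elim=> [|k IH] hk.
  exists set0; rewrite sub0set cards0 !muln1; split=> //.
  by apply/subset_leq_card/subsetP => v vT; rewrite inE vT sub0set.
have [Y [YS cardY hY]] := IH (ltac:(lia)).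
pose R := S :\: Y; pose A := common_nbh T Y.
have cardR : #|R| = #|S| - k by rewrite cardsD (setIidPr YS) cardY.
have [y yR hy] : exists2 y, y \in R & q * #|[set v in A | ~~ E v y]| <= #|A|.
  apply: exists_rarely_missed => [|v]; first by rewrite cardR; lia.
  rewrite inE => /andP[/hT hv _].
  have : #|R :\: nbh E v| <= #|S :\: nbh E v| by apply/subset_leq_card/setSD/subsetDl.
  move/(leq_mul (leqnn (2 * q))); rewrite cardR in hk *; lia.
have [yY yS] : y \notin Y /\ y \in S by move: yR; rewrite inE => /andP[].
exists (y |: Y); split; first by rewrite subUset sub1set yS YS.
  by rewrite cardsU1 yY cardY.
have -> : common_nbh T (y |: Y) = [set v in A | E v y].
  by apply/setP => v; rewrite !inE subUset sub1set inE andbAC andbA.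
have hqa : (q - 1) * #|A| <= #|[set v in A | E v y]| * q.
  have cardA : #|A| = #|[set v in A | E v y]| + #|[set v in A | ~~ E v y]|.
    by rewrite -(cardsID [set v | E v y] A); congr (_ + _); apply: eq_card => v; rewrite !inE andbC.
  by rewrite cardA in hy *; rewrite mulnBl mul1n mulnDr [_ * q]mulnC; lia.
rewrite !expnS mulnCA; apply: leq_trans (_ : (q - 1) * (#|A| * q ^ k) <= _).
  by rewrite leq_mul2l hY orbT.
by rewrite mulnA [_ * (q * _)]mulnA leq_mul2r hqa orbT.
Qed.

End Greedy.

Section AlmostCovers.
Variables (V1 V2 : finType) (E : V1 -> V2 -> bool) (K : nat).

Definition almost_covers (S : {set V2}) (v : V1) := 16 * K * #|S :\: nbh E v| <= #|S|.

Variables (t1 c : nat).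
Hypotheses (K0 : 0 < K) (c0 : 0 < c) (noK : no_biclique E t1 (4 * K * c)).

Lemma card_almost_covers_lt (S : {set V2}) : 2 * (4 * K * c) <= #|S| ->
  #|[set v | almost_covers S v]| < t1 * 2 ^ c.
Proof.
move=> hS; set T := [set v | _].
have [Y [YS cardY hY]] := greedy_common_nbh (E := E) (q := 2 * (4 * K)) (S := S) (T := T) (ltac:(lia))
  (fun v vT => ltac:(move: vT; rewrite inE /almost_covers; lia)) hS.
have hexp : (2 * (4 * K)) ^ (4 * K * c) <= 2 ^ c * (2 * (4 * K) - 1) ^ (4 * K * c).
  by rewrite !(expnM _ (4 * K) c) -expnMn leq_exp2r // expn_double_leq ?muln_gt0.
have W0 : 0 < (2 * (4 * K) - 1) ^ (4 * K * c) by rewrite expn_gt0; lia.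
rewrite ltnNge; apply/negP => hT.
have : t1 <= #|common_nbh E T Y|.
  rewrite -(leq_pmul2r (expn_gt0 2 c)) -(leq_pmul2r W0).
  apply: leq_trans (leq_mul hT (leqnn _)) (leq_trans hY _).
  by rewrite -[_ * 2 ^ c * _]mulnA leq_mul2l hexp orbT.
move/noK/(_ cardY); apply=> x y; rewrite inE => /andP[_ /subsetP Ynx] /Ynx.
by rewrite inE.
Qed.

End AlmostCovers.

Section FarPairs.
Variables (V1 V2 : finType) (E : V1 -> V2 -> bool) (K : nat).

Definition close (u v : V1) := 32 * K * #|divs E u v| < #|V2|.

Lemma close_refl : 0 < #|V2| -> reflexive close.
Proof. by move=> V2_gt0 u; rewrite /close /divs setDv setU0 cards0 muln0. Qed.

Lemma close_sym : symmetric close.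
Proof. by move=> u v; rewrite /close /divs setUC. Qed.

Lemma far_divb_large u v : ~~ close u v -> well_ordered_pair E u v ->
  #|V2| <= 64 * K * #|divb_ord E u v|.
Proof.
rewrite /close /well_ordered_pair /divb_ord -leqNgt => far ordered.
have [hdiv _] := leq_card_setU (nbh E u :\: nbh E v) (nbh E v :\: nbh E u).
have : #|divs E u v| <= 2 * #|nbh E u :\: nbh E v| by rewrite /divs; lia.
by move/(leq_mul (leqnn (32 * K))); lia.
Qed.

Definition conflict (p q : V1 * V1) := (p != q) &&
  (almost_covers E K (divb_ord E p.1 p.2) q.1 || almost_covers E K (divb_ord E p.1 p.2) q.2).

Variables (t1 c : nat).
Hypotheses (K0 : 0 < K) (c0 : 0 < c) (noK : no_biclique E t1 (4 * K * c)).

Lemma card_conflict_le (Q : {set V1 * V1}) p : disjoint_pairs Q -> p \in Q ->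
  2 * (4 * K * c) <= #|divb_ord E p.1 p.2| -> #|[set q in Q | conflict p q]| <= t1 * 2 ^ c.
Proof.
move=> Qdisj pQ hp; pose D := divb_ord E p.1 p.2.
pose f (q : V1 * V1) := if almost_covers E K D q.1 then q.1 else q.2.
have f_inj : {in [set q in Q | conflict p q] &, injective f}.
  move=> q r; rewrite !inE => /andP[qQ _] /andP[rQ _] fqr; apply/eqP; apply: contraT => qr.
  have [q1r1 q2r2 q1r2] := Qdisj q r qQ rQ qr.
  have [_ _ r1q2] := Qdisj r q rQ qQ (ltac:(by rewrite eq_sym)).
  by move: fqr q1r1 q2r2 q1r2 r1q2; rewrite /f; case: ifP => _; case: ifP => _ ->; rewrite eqxx.
rewrite -(card_in_imset f_inj); apply/ltnW.
apply: leq_ltn_trans (card_almost_covers_lt K0 c0 noK hp).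
apply/subset_leq_card/subsetP => w /imsetP[q]; rewrite !inE => /andP[_ /andP[_ hq]] ->.
by rewrite /f; case: ifP => // nq1; move: hq; rewrite nq1.
Qed.

Hypotheses (noK' : no_biclique (fun x y => ~~ E x y) t1 (4 * K * c))
  (V2_large : 128 * K * (4 * K * c) <= #|V2|).

Lemma card_close_le u : #|[set w | close u w]| <= t1 * 2 ^ c.
Proof.
have V2_big : 4 * (4 * K * c) <= #|V2| by apply: leq_trans V2_large; apply: leq_mul; lia.
have [hu|hu] := leqP #|V2| (2 * #|nbh E u|).
  apply/ltnW/(leq_ltn_trans _ (card_almost_covers_lt K0 c0 noK (S := nbh E u) _)); last by lia.
  apply/subset_leq_card/subsetP => w; rewrite !inE /close /almost_covers => hw.
  have : #|nbh E u :\: nbh E w| <= #|divs E u w| by apply/subset_leq_card/subsetUl.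
  by move/(leq_mul (leqnn (32 * K))); lia.
have cardC := cardsC (nbh E u).
apply/ltnW/(leq_ltn_trans _ (card_almost_covers_lt K0 c0 noK' (S := ~: nbh E u) _)); last by lia.
apply/subset_leq_card/subsetP => w; rewrite !inE /close /almost_covers => hw.
have : #|~: nbh E u :\: nbh (fun x y => ~~ E x y) w| <= #|divs E u w|.
  apply/subset_leq_card/subsetP => y; rewrite !inE negbK => /andP[-> ->].
  by rewrite orbT.
by move/(leq_mul (leqnn (32 * K))); lia.
Qed.

End FarPairs.

(* With e = log2 m and f = log2 n (m = |V2|, n = |V1|): degree buckets have
   width 2^(e/2) ~ m^(1/2), and the loss L = t1 2^c has t1 = K (f + 1) and
   2^c ~ m^(1/4).  Once f >= ramsey_exponent K, both the pairing loss
   (#buckets) L ~ K f m^(3/4) and the loss L^2 of the independent set are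
   small against n. *)
Definition ramsey_exponent K := 32 * (1024 * K * K + 6) + 64.
Definition biclique_scale m := trunc_log 2 m %/ 4 + 1.
Definition bucket_width m := 2 ^ (trunc_log 2 m %/ 2).
Definition ramsey_side K n := K * (trunc_log 2 n).+1.

Lemma lt_exp_biclique_scale m : m < 2 ^ (4 * biclique_scale m).
Proof.
apply: leq_trans (trunc_log_ltn m (ltnSn 1)) _.
by rewrite leq_exp2l // /biclique_scale; lia.
Qed.

Lemma bucket_width_sq m : 0 < m -> bucket_width m * bucket_width m <= m.
Proof.
move=> m0; rewrite -expnD; apply: leq_trans (trunc_logP (ltnSn 1) m0).
by rewrite leq_exp2l //; lia.
Qed.

Section Thresholds.
Variables (K m n : nat).
Hypotheses (K1 : 1 < K) (m_large : 2 ^ (ramsey_exponent K).+1 <= m) (m_le : m <= n * 2).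

Let e := trunc_log 2 m.
Let f := trunc_log 2 n.
Let m_gt0 : 0 < m. Proof. by apply: leq_trans m_large; rewrite expn_gt0. Qed.
Let exp_e_le : 2 ^ e <= m. Proof. exact: trunc_logP. Qed.
Let lt_exp_f : n < 2 ^ f.+1. Proof. exact: trunc_log_ltn. Qed.

Lemma exponent_lt_log_m : ramsey_exponent K < e.
Proof. by apply: trunc_log_max. Qed.

Lemma exponent_le_log_n : ramsey_exponent K <= f.
Proof. by apply: trunc_log_max => //; move: m_large m_le; rewrite expnSr; lia. Qed.

Lemma log_m_le_log_n : e <= f.+1.
Proof. by rewrite -ltnS -(ltn_exp2l _ _ (ltnSn 1)) expnS; lia. Qed.

Lemma biclique_side_small : 128 * K * (4 * K * biclique_scale m) <= m.
Proof.
have he := exponent_lt_log_m; rewrite /ramsey_exponent in he.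
apply: leq_trans exp_e_le.
apply: leq_trans (_ : 512 * K * K * e.+1 <= _).
  rewrite /biclique_scale -/e; nia.
apply: leq_trans (mul_leq_exp2 (ltac:(lia) : 32 * (512 * K * K + 6) <= e)) _.
by rewrite leq_exp2l //; lia.
Qed.

Let exp_f_le : 2 ^ f <= n.
Proof. by apply: trunc_logP => //; lia. Qed.

Let loss_le : ramsey_side K n * 2 ^ biclique_scale m <= 2 ^ (f %/ 16 + biclique_scale m).
Proof.
have := exponent_le_log_n; rewrite /ramsey_exponent => hf.
have KK : K <= K * K by rewrite leq_pmulr; lia.
by rewrite expnD leq_mul2r /ramsey_side mul_leq_exp2 ?orbT //; lia.
Qed.

Lemma few_buckets :
  2 * (m %/ bucket_width m).+1 * (ramsey_side K n * 2 ^ biclique_scale m) <= n.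
Proof.
have hq : m %/ bucket_width m <= 2 ^ (e.+1 - e %/ 2).
  rewrite expnB //; last by lia.
  exact/leq_div2r/ltnW/trunc_log_ltn.
have hb : 2 * (m %/ bucket_width m).+1 <= 2 ^ (e.+3 - e %/ 2).
  rewrite (_ : e.+3 - e %/ 2 = (e.+1 - e %/ 2).+2) ?expnS; last by lia.
  by have := expn_gt0 2 (e.+1 - e %/ 2); lia.
apply: leq_trans (leq_mul hb loss_le) _; rewrite -expnD.
apply: leq_trans exp_f_le; rewrite leq_exp2l //.
have := log_m_le_log_n; have := exponent_le_log_n; rewrite /ramsey_exponent /biclique_scale -/e; lia.
Qed.

Lemma loss_sq_small :
  256 * (ramsey_side K n * 2 ^ biclique_scale m) * (ramsey_side K n * 2 ^ biclique_scale m) <= n.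
Proof.
apply: leq_trans (leq_mul (leq_mul (leqnn (2 ^ 8)) loss_le) loss_le) _.
rewrite -!expnD; apply: leq_trans exp_f_le; rewrite leq_exp2l //.
have := log_m_le_log_n; have := exponent_le_log_n; rewrite /ramsey_exponent /biclique_scale -/e; lia.
Qed.

End Thresholds.

Local Open Scope ring_scope.

Lemma sqrt_nat_le (a k : nat) : (a <= k * k)%N -> Num.sqrt (a%:R : RR) <= k%:R.
Proof.
move=> h; rewrite -[X in _ <= X]ger0_norm ?ler0n // -sqrtr_sqr ler_sqrt ?exprn_ge0 ?ler0n //.
by rewrite -natrX ler_nat expnS expn1.
Qed.

Lemma nat_le_sqrt (s m : nat) : (s * s <= m)%N -> (s%:R : RR) <= Num.sqrt m%:R.
Proof.
move=> h; rewrite -[X in X <= _]ger0_norm ?ler0n // -sqrtr_sqr ler_sqrt ?ler0n //.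
by rewrite -natrX ler_nat expnS expn1.
Qed.

Section PairMatching.
Variables (V1 V2 : finType) (E : V1 -> V2 -> bool) (K s : nat).
Hypotheses (K0 : (0 < K)%N) (s0 : (0 < s)%N) (s_sq : (s * s <= #|V2|)%N).

Let bucket u := (deg E u %/ s)%N.

Lemma pair_matching_of_far_independent (I : {set V1 * V1}) :
  {subset I <= far_pair (close E K) bucket (well_ordered_pair E) [set: V1]} -> disjoint_pairs I ->
  {in I &, forall p q, p != q -> ~~ conflict E K p q} ->
  pair_matching E (1024 * K * K)%N%:R^-1
    (fun i : 'I_#|I| => (enum_val i).1) (fun i => (enum_val i).2).
Proof.
move=> Ifar Idisj Iind.
have evI (i : 'I_#|I|) : enum_val i \in I by apply: enum_valP.
have evne (i j : 'I_#|I|) : i != j -> enum_val i != enum_val j.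
  by apply: contra => /eqP /enum_val_inj ->.
have far i := and5P (Ifar _ (evI i)).
split; [|split; [|split; [|split]]].
- by move=> i; have [_ _ hcl _ _] := far i; apply: contraNneq hcl => ->; rewrite close_refl //; nia.
- by move=> i j ij; apply: Idisj; rewrite ?evI ?evne.
- by move=> i; have [_ _ _ _ ->] := far i.
- move=> i; apply: le_trans (nat_le_sqrt s_sq); have [_ _ _ /eqP hb _] := far i.
  rewrite pmulrn ler_int /dpair.
  have := divn_eq (deg E (enum_val i).1) s; have := divn_eq (deg E (enum_val i).2) s.
  have := ltn_pmod (deg E (enum_val i).1) s0; rewrite /bucket in hb; rewrite hb; lia.
- move=> i j ij; have [_ _ far_i _ ordered_i] := far i.
  have hD := far_divb_large far_i ordered_i.
  have := Iind _ _ (evI i) (evI j) (evne i j ij).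
  rewrite /conflict evne // /= negb_or /almost_covers -!ltnNge => /andP[h1 h2].
  (* |V2| <= 64K |divb p| < 64K * 16K |divb p :\: N(w)| *)
  have scale (x : nat) : (#|divb_ord E (enum_val i).1 (enum_val i).2| < 16 * K * x)%N ->
      (1024 * K * K)%N%:R^-1 * #|V2|%:R <= x%:R :> RR.
    move=> hx; rewrite ler_pdivrMl ?ltr0n ?muln_gt0 ?K0 // -natrM ler_nat.
    by apply: leq_trans hD _; move/ltnW/(leq_mul (leqnn (64 * K))): hx; lia.
  by split; apply: scale.
Qed.

Variables (t1 c : nat).
Hypotheses (c0 : (0 < c)%N) (t10 : (0 < t1)%N)
  (noK : no_biclique E t1 (4 * K * c)) (noK' : no_biclique (fun x y => ~~ E x y) t1 (4 * K * c))
  (V2_large : (128 * K * (4 * K * c) <= #|V2|)%N)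
  (V1_buckets : (2 * (#|V2| %/ s).+1 * (t1 * 2 ^ c) <= #|V1|)%N)
  (V1_large : (256 * (t1 * 2 ^ c) * (t1 * 2 ^ c) <= #|V1|)%N).

Lemma exists_far_independent : exists I : {set V1 * V1},
  [/\ {subset I <= far_pair (close E K) bucket (well_ordered_pair E) [set: V1]}, disjoint_pairs I,
      {in I &, forall p q, p != q -> ~~ conflict E K p q} & (#|V1| <= #|I| * #|I|)%N].
Proof.
have bucket_lt u : (bucket u < (#|V2| %/ s).+1)%N by rewrite ltnS leq_div2r ?max_card.
have ordered_total : total (well_ordered_pair E) by move=> u v; apply: leq_total.
have V2_gt0 : (0 < #|V2|)%N by nia.
have [Q Qfar [Qdisj cardQ]] := exists_far_pairing (close_refl E K V2_gt0) (close_sym E K)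
  (card_close_le K0 c0 noK noK' V2_large) bucket_lt ordered_total [set: V1].
have divb_large p : p \in Q -> (2 * (4 * K * c) <= #|divb_ord E p.1 p.2|)%N.
  case/Qfar/and5P => _ _ far_p _ ordered_p.
  have h := leq_trans V2_large (far_divb_large far_p ordered_p).
  rewrite -(@leq_pmul2l (64 * K)) ?muln_gt0 //; apply: leq_trans h; lia.
have [I [IQ Iind cardI]] := independent_set_of_outdeg
  (fun p pQ => card_conflict_le K0 c0 noK Qdisj pQ (divb_large p pQ)).
exists I; split => [p /(subsetP IQ)/Qfar //|p q /(subsetP IQ) pQ /(subsetP IQ)|//|].
  exact: Qdisj.
rewrite cardsT in cardQ.
have := V1_buckets; have := V1_large.
set L := (t1 * 2 ^ c)%N; set nb := (#|V2| %/ s).+1 => hL hnb.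
have L0 : (0 < L)%N by rewrite muln_gt0 t10 expn_gt0.
have IL : (#|I| <= L * #|I|)%N by rewrite leq_pmull.
apply: (leq_sq_of_linear _ _ hL); first by nia.
lia.
Qed.

Lemma exists_pair_matching : exists (k : nat) (x y : 'I_k -> V1),
  Num.sqrt (#|V1|%:R : RR) <= k%:R /\ pair_matching E (1024 * K * K)%N%:R^-1 x y.
Proof.
have [I [Ifar Idisj Iind cardI]] := exists_far_independent.
exists #|I|, (fun i => (enum_val i).1), (fun i => (enum_val i).2).
by split; [exact: sqrt_nat_le | exact: pair_matching_of_far_independent].
Qed.

End PairMatching.

Lemma log2_nat_le (C : RR) (K N j : nat) : 0 <= C -> C <= K%:R ->
  (0 < N)%N -> (N < 2 ^ j)%N -> C * log2 N%:R <= (K * j)%N%:R.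
Proof.
move=> C0 CK N0 Nj; have ln2 : (0 : RR) < ln 2 by rewrite ln_gt0 // ltr1n.
have log_ge0 : 0 <= log2 N%:R by rewrite divr_ge0 ?ln_ge0 ?ler1n // ltW.
have log_le : log2 N%:R <= j%:R.
  rewrite ler_pdivrMr // mulr_natl -lnXn // ler_ln ?posrE ?ltr0n ?exprn_gt0 //.
  by rewrite -natrX ler_nat ltnW.
by rewrite natrM; apply: le_trans (ler_wpM2r log_ge0 CK) (ler_wpM2l (ler0n _ K) log_le).
Qed.

Lemma no_biclique_of_ramsey (V1 V2 : finType) (E : V1 -> V2 -> bool) (C : RR) (t1 t2 : nat) :
  bip_ramsey E C -> C * log2 #|V1|%:R <= t1%:R -> C * log2 #|V2|%:R <= t2%:R ->
  no_biclique E t1 t2 /\ no_biclique (fun x y => ~~ E x y) t1 t2.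
Proof.
move=> hR h1 h2; split=> T1 T2 hT1 hT2 complete;
  apply: (hR #|T1| #|T2|); rewrite ?hT2 ?(le_trans h1) ?ler_nat //;
  exists T1, T2; do 2!split=> //.
- by left.
- by right.
Qed.

Theorem lemma3p1 :
  forall C : RR, 1 < C ->
  exists (eps : RR) (nC : nat), 0 < eps /\
  forall (V1 V2 : finType) (E : V1 -> V2 -> bool),
    bip_ramsey E C ->
    (#|V2|%:R / 2 <= (#|V1|%:R : RR)) -> (nC%:R <= (#|V2|%:R / 2 : RR)) ->
    (exists (k : nat) (x : 'I_k.+1 -> V1),
        Num.sqrt (#|V1|%:R : RR) <= k%:R /\ pair_star E eps x) \/
    (exists (k : nat) (x y : 'I_k -> V1),
        Num.sqrt (#|V1|%:R : RR) <= k%:R /\ pair_matching E eps x y).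
Proof.
move=> C C1; have C0 : 0 <= C by rewrite (le_trans ler01) ?ltW.
pose K := Num.bound C; have CK : C < K%:R := archi_boundP C0.
have K1 : (1 < K)%N by rewrite -(ltr_nat RR) (lt_trans C1).
exists (1024 * K * K)%N%:R^-1, (2 ^ ramsey_exponent K)%N.
split=> [|V1 V2 E ramsey V1_half V2_large]; first by rewrite invr_gt0 ltr0n !muln_gt0; lia.
have m_large : (2 ^ (ramsey_exponent K).+1 <= #|V2|)%N.
  by rewrite expnSr -(ler_nat RR) natrM -ler_pdivlMr.
have m_le : (#|V2| <= #|V1| * 2)%N by rewrite -(ler_nat RR) natrM -ler_pdivrMr.
have m_gt0 : (0 < #|V2|)%N by apply: leq_trans m_large; rewrite expn_gt0.
have log_V1 : C * log2 #|V1|%:R <= (ramsey_side K #|V1|)%:R.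
  by apply: log2_nat_le C0 (ltW CK) _ (trunc_log_ltn _ (ltnSn 1)); lia.
have log_V2 : C * log2 #|V2|%:R <= (4 * K * biclique_scale #|V2|)%N%:R.
  rewrite (mulnC 4%N) -mulnA.
  exact: log2_nat_le C0 (ltW CK) m_gt0 (lt_exp_biclique_scale _).
have [noK noK'] := no_biclique_of_ramsey ramsey log_V1 log_V2.
right; apply: (exists_pair_matching _ _ (bucket_width_sq m_gt0) _ _ noK noK'
  (biclique_side_small K1 m_large m_le) (few_buckets K1 m_large m_le) (loss_sq_small K1 m_large m_le)).
all: by rewrite ?expn_gt0 ?muln_gt0 ?/biclique_scale ?addn1; lia.
Qed.
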